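(* Let $N\ge1$ be an integer, $d>0$, $T>0$, and $0\le s_1\le\dots\le s_N$. Let $x^*$ be the optimal solution of the (assumed feasible) problem $$\min_{x\in\mathbb{R}^{N+1}}\ \sum_{i=1}^{N+1}x_i^2$$ subject to - $\sum_{i=1}^k x_i\ge s_k+kd$ for $1\le k\le N$, - $x_i\ge 2d$ for $2\le i\le N$, - $x_{N+1}\ge d$, - $\sum_{i=1}^{N+1}x_i=T+Nd$. Then $x_N^*\ge x_{N+1}^*$. Moreover, $x_N^*>x_{N+1}^*$ only if at least one of the following holds: (1) $\sum_{i=1}^N x_i^*=s_N+Nd$, or (2) $x_N^*=2d$.
   Context: The problem arises from age-of-information minimization for a single energy harvesting transmitter with energy arrival times $s_k$, fixed service time $d$, and session length $T$. Its objective is strictly convex, so the optimal solution is unique. *)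

(* concrete reals R. Vectors in R^{N+1} are functions nat -> R,
   only indices 1..N+1 are used. *)
From Stdlib Require Import Reals Lra Lia.
Open Scope R_scope.

Fixpoint psum (f : nat -> R) (k : nat) : R :=
  match k with
  | O => 0
  | S k' => psum f k' + f k
  end.

Definition feasible (N : nat) (d T : R) (s : nat -> R) (x : nat -> R) : Prop :=
  (forall k : nat, (1 <= k <= N)%nat -> psum x k >= s k + INR k * d) /\
  (forall i : nat, (2 <= i <= N)%nat -> x i >= 2 * d) /\
  x (N + 1)%nat >= d /\
  psum x (N + 1) = T + INR N * d.

Definition objective (N : nat) (x : nat -> R) : R :=
  psum (fun i => x i ^ 2) (N + 1).

Definition optimal (N : nat) (d T : R) (s : nat -> R) (x : nat -> R) : Prop :=
  feasible N d T s x /\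
  forall y : nat -> R, feasible N d T s y -> objective N x <= objective N y.

(* Moving mass between the last two coordinates, x_N <- x_N + e and
   x_(N+1) <- x_(N+1) - e, keeps the total sum and every partial sum except
   the N-th, and changes the objective by 2 e (x_N - x_(N+1) + e).  If
   x_N < x_(N+1), the transfer e = (x_(N+1) - x_N) / 2 is feasible and strictly
   improves the objective.  If x_N > x_(N+1) while neither the N-th partial sum
   constraint nor x_N >= 2d is tight, a small negative transfer is feasible and
   strictly improves it as well. *)

From Stdlib Require Import Reals Lra Lia.
Open Scope R_scope.

Lemma psum_ext (f g : nat -> R) (k : nat) :
  (forall i, (1 <= i <= k)%nat -> f i = g i) -> psum f k = psum g k.
Proof.
  induction k as [|k IH]; intros Hfg; simpl; [reflexivity|].
  rewrite IH by (intros; apply Hfg; lia).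
  rewrite (Hfg (S k)) by lia.
  reflexivity.
Qed.

Lemma psum_add1 (f : nat -> R) (n : nat) : psum f (n + 1) = psum f n + f (n + 1)%nat.
Proof. rewrite Nat.add_1_r. reflexivity. Qed.

Lemma psum_pred (f : nat -> R) (n : nat) :
  (1 <= n)%nat -> psum f n = psum f (n - 1) + f n.
Proof.
  intros Hn; destruct n as [|n]; [lia|].
  simpl; rewrite Nat.sub_0_r; reflexivity.
Qed.

Definition transfer (x : nat -> R) (n : nat) (e : R) (i : nat) : R :=
  if Nat.eqb i n then x i + e
  else if Nat.eqb i (n + 1) then x i - e
  else x i.

Lemma transfer_other x n e i :
  i <> n -> i <> (n + 1)%nat -> transfer x n e i = x i.
Proof.
  intros Hn Hn1; unfold transfer.
  destruct (Nat.eqb_spec i n); [contradiction|].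
  destruct (Nat.eqb_spec i (n + 1)); [contradiction|reflexivity].
Qed.

Lemma transfer_at x n e : transfer x n e n = x n + e.
Proof. unfold transfer; rewrite Nat.eqb_refl; reflexivity. Qed.

Lemma transfer_next x n e : transfer x n e (n + 1) = x (n + 1)%nat - e.
Proof.
  unfold transfer.
  destruct (Nat.eqb_spec (n + 1) n); [lia|].
  rewrite Nat.eqb_refl; reflexivity.
Qed.

Lemma psum_transfer_lt x n e k :
  (k < n)%nat -> psum (transfer x n e) k = psum x k.
Proof. intros Hk; apply psum_ext; intros; apply transfer_other; lia. Qed.

Lemma psum_transfer_at x n e :
  (1 <= n)%nat -> psum (transfer x n e) n = psum x n + e.
Proof.
  intros Hn.
  rewrite !(psum_pred _ n Hn), psum_transfer_lt, transfer_at by lia.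
  ring.
Qed.

Lemma psum_transfer_next x n e :
  (1 <= n)%nat -> psum (transfer x n e) (n + 1) = psum x (n + 1).
Proof.
  intros Hn.
  rewrite !psum_add1, psum_transfer_at, transfer_next by exact Hn.
  ring.
Qed.

Lemma objective_transfer N x e :
  (1 <= N)%nat ->
  objective N (transfer x N e) =
  objective N x + 2 * e * (x N - x (N + 1)%nat + e).
Proof.
  intros HN; unfold objective.
  rewrite !psum_add1, !(psum_pred _ N HN), transfer_at, transfer_next.
  rewrite (psum_ext (fun i => transfer x N e i ^ 2) (fun i => x i ^ 2))
    by (intros; rewrite transfer_other by lia; reflexivity).
  ring.
Qed.

Lemma transfer_feasible N d T s x e :
  (1 <= N)%nat -> feasible N d T s x ->
  psum x N + e >= s N + INR N * d ->
  ((2 <= N)%nat -> x N + e >= 2 * d) ->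
  x (N + 1)%nat - e >= d ->
  feasible N d T s (transfer x N e).
Proof.
  intros HN [Hpsum [Hmid [_ Htotal]]] Hpsum_N Hmid_N Hlast.
  split; [|split; [|split]].
  - intros k Hk; destruct (Nat.eq_dec k N) as [->|].
    + rewrite psum_transfer_at by exact HN; exact Hpsum_N.
    + rewrite psum_transfer_lt by lia; apply Hpsum; lia.
  - intros i Hi; destruct (Nat.eq_dec i N) as [->|].
    + rewrite transfer_at; apply Hmid_N; lia.
    + rewrite transfer_other by lia; apply Hmid; lia.
  - rewrite transfer_next; exact Hlast.
  - rewrite psum_transfer_next by exact HN; exact Htotal.
Qed.

Lemma optimal_transfer_nonneg N d T s x e :
  (1 <= N)%nat -> optimal N d T s x ->
  feasible N d T s (transfer x N e) ->
  0 <= e * (x N - x (N + 1)%nat + e).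
Proof.
  intros HN [_ Hopt] Hfeas.
  specialize (Hopt _ Hfeas); rewrite objective_transfer in Hopt by exact HN.
  lra.
Qed.

Lemma feasible_at_N_ge_d N d T s x :
  (1 <= N)%nat -> 0 < d -> 0 <= s 1%nat -> feasible N d T s x -> x N >= d.
Proof.
  intros HN Hd Hs1 [Hpsum [Hmid _]].
  destruct (Nat.eq_dec N 1) as [->|].
  - specialize (Hpsum 1%nat ltac:(lia)); simpl in Hpsum; lra.
  - specialize (Hmid N ltac:(lia)); lra.
Qed.

Lemma optimal_last_le N d T s x :
  (1 <= N)%nat -> 0 < d -> 0 <= s 1%nat -> optimal N d T s x ->
  x N >= x (N + 1)%nat.
Proof.
  intros HN Hd Hs1 Hopt.
  pose proof Hopt as [Hfeas _].
  pose proof (feasible_at_N_ge_d N d T s x HN Hd Hs1 Hfeas) as HxN.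
  pose proof Hfeas as [Hpsum [Hmid [Hlast _]]].
  destruct (Rge_or_gt (x N) (x (N + 1)%nat)) as [Hge|Hlt]; [exact Hge|].
  set (e := (x (N + 1)%nat - x N) / 2).
  assert (Hfeas' : feasible N d T s (transfer x N e)).
  { apply transfer_feasible; [exact HN|exact Hfeas| | |]; unfold e.
    - specialize (Hpsum N ltac:(lia)); lra.
    - intros HN2; specialize (Hmid N ltac:(lia)); lra.
    - lra. }
  pose proof (optimal_transfer_nonneg N d T s x e HN Hopt Hfeas') as Hnonneg.
  unfold e in Hnonneg; nra.
Qed.

Lemma optimal_gap_tight N d T s x :
  (1 <= N)%nat -> optimal N d T s x ->
  x N > x (N + 1)%nat ->
  psum x N = s N + INR N * d \/ x N = 2 * d.
Proof.
  intros HN Hopt Hgap.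
  pose proof Hopt as [Hfeas _].
  pose proof Hfeas as [Hpsum [Hmid [Hlast _]]].
  destruct (Req_dec (psum x N) (s N + INR N * d)) as [E|Hslack]; [left; exact E|].
  destruct (Req_dec (x N) (2 * d)) as [E|Hne]; [right; exact E|].
  exfalso.
  specialize (Hpsum N ltac:(lia)).
  (* |x_N - 2d| is the slack of x_N >= 2d when N >= 2; for N = 1 that
     constraint is absent and any positive bound will do. *)
  assert (Hslack2 : 0 < Rabs (x N - 2 * d)) by (apply Rabs_pos_lt; lra).
  set (t := Rmin ((x N - x (N + 1)%nat) / 2)
                 (Rmin (psum x N - (s N + INR N * d)) (Rabs (x N - 2 * d)))).
  assert (Ht : 0 < t).
  { unfold t; apply Rmin_glb_lt; [lra|]; apply Rmin_glb_lt; lra. }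
  assert (Ht_gap : t <= (x N - x (N + 1)%nat) / 2) by apply Rmin_l.
  assert (Ht_slack : t <= psum x N - (s N + INR N * d))
    by (eapply Rle_trans; [apply Rmin_r|apply Rmin_l]).
  assert (Ht_mid : t <= Rabs (x N - 2 * d))
    by (eapply Rle_trans; [apply Rmin_r|apply Rmin_r]).
  assert (Hfeas' : feasible N d T s (transfer x N (- t))).
  { apply transfer_feasible; [exact HN|exact Hfeas| | |].
    - lra.
    - intros HN2; specialize (Hmid N ltac:(lia)).
      rewrite Rabs_right in Ht_mid by lra; lra.
    - lra. }
  pose proof (optimal_transfer_nonneg N d T s x (- t) HN Hopt Hfeas').
  nra.
Qed.

Theorem lemma3 (N : nat) (d T : R) (s : nat -> R) (x : nat -> R) :
  (1 <= N)%nat -> 0 < d -> 0 < T ->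
  0 <= s 1%nat ->
  (forall k : nat, (1 <= k)%nat -> (k < N)%nat -> s k <= s (S k)) ->
  (exists y : nat -> R, feasible N d T s y) ->
  optimal N d T s x ->
  x N >= x (N + 1)%nat /\
  (x N > x (N + 1)%nat ->
     psum x N = s N + INR N * d \/ x N = 2 * d).
Proof.
  intros HN Hd _ Hs1 _ _ Hopt.
  split.
  - exact (optimal_last_le N d T s x HN Hd Hs1 Hopt).
  - exact (optimal_gap_tight N d T s x HN Hopt).
Qed.
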